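(* There is an absolute constant $C>0$ such that the following holds. Let $\epsilon\in(0,1)$, let $u\in\mathbb{R}^d$, and let $S\subseteq\mathbb{R}^d$ be a finite set of vectors of Euclidean norm at most $1$ with pairwise distinct values $u^Tx$, of intrinsic dimension $d'$. Let $t=\lceil C d'\log(d'/\epsilon)\rceil$ and suppose $|S|\ge 4t$. Then $$|\{x\in S:\ S\setminus\{x\}\vdash x\}|\ge \tfrac34|S|.$$
   Context: For a finite set $T=\{x_1,\dots,x_s\}$ sorted so that $u^Tx_1>\dots>u^Tx_s$, write $T\vdash x$ if $\min_{\alpha_1,\dots,\alpha_{s-1}\ge 0}\big\|x-x_1-\sum_{j=1}^{s-1}\alpha_j(x_{j+1}-x_j)\big\|_2\le\epsilon$. The intrinsic dimension of a set is the smallest number of orthonormal vectors whose span contains the set. *)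

From HB Require Import structures.
From mathcomp Require Import all_boot all_order all_algebra.
From mathcomp Require Import boolp reals exp.
Set Implicit Arguments. Unset Strict Implicit. Unset Printing Implicit Defensive.
Import Order.TTheory GRing.Theory Num.Theory.
Local Open Scope ring_scope.

Definition dotv (R : ringType) (d : nat) (u x : 'rV[R]_d) : R :=
  \sum_(i < d) u 0 i * x 0 i.

Definition norm2 (R : rcfType) (d : nat) (x : 'rV[R]_d) : R :=
  Num.sqrt (\sum_(i < d) x 0 i ^+ 2).

Definition sort_by_u (R : realFieldType) (d : nat) (u : 'rV[R]_d)
  (T : seq 'rV[R]_d) : seq 'rV[R]_d :=
  sort (fun x y => dotv u y <= dotv u x) T.

(* T |- x : min_{alpha >= 0} || x - x_1 - sum_j alpha_j (x_{j+1} - x_j) || <= eps.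
   The minimum over the closed cone is attained, so this is written as the
   existence of nonnegative alpha achieving distance <= eps.
   For empty T (no x_1) the relation is false. *)
Definition derives (R : rcfType) (d : nat) (eps : R) (u : 'rV[R]_d)
  (T : seq 'rV[R]_d) (x : 'rV[R]_d) : Prop :=
  let xs := sort_by_u u T in
  match xs with
  | [::] => False
  | x1 :: _ =>
      exists alpha : nat -> R, (forall j, 0 <= alpha j) /\
        norm2 (x - x1 - \sum_(j < (size xs).-1)
                          alpha j *: (xs`_j.+1 - xs`_j)) <= eps
  end.

Definition orth_span_dim (R : rcfType) (d : nat) (S : seq 'rV[R]_d) (k : nat) : Prop :=
  exists V : 'M[R]_(k, d), V *m V^T = 1%:M /\ forall x, x \in S -> (x <= V)%MS.

Definition intrinsic_dim (R : rcfType) (d : nat) (S : seq 'rV[R]_d) (k : nat) : Prop :=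
  orth_span_dim S k /\ forall k', orth_span_dim S k' -> (k <= k')%N.

(* Sort [S] by decreasing [u]-value into [y_0, ..., y_(s-1)].  If [y_(b+1)] is
   not derivable from the other points, a separation argument for the cone
   spanned by the consecutive differences of the remaining points yields a
   vector [h] with small inner products with the earlier steps [y_(a+1) - y_a]
   but a large one with [y_(b+1) - y_b].  Expressed in an orthonormal basis of
   the [d']-dimensional span of [S], the steps [z_b] at non-derivable points
   thus satisfy [(h.z_b)^2 >= (eps/2)^2 |h|^2 + sum_(a<b) (h.z_a)^2], so each
   of them at least doubles [det ((eps/2)^2 I + sum_a z_a^T z_a)].  Comparing
   with the trivial bound on that determinant gives, for [m] such points,
   [m + 1 <= 64 d' ln (d'/eps) <= t <= |S|/4].  In dimension one every point
   except [y_0] is derivable outright. *)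

From HB Require Import structures.
From mathcomp Require Import all_boot all_order all_algebra perm.
From mathcomp Require Import boolp classical_sets reals exp.
From mathcomp Require Import ring lra zify.
Import Order.TTheory GRing.Theory Num.Theory.
Local Open Scope ring_scope.

Set Implicit Arguments. Unset Strict Implicit. Unset Printing Implicit Defensive.

Section InnerProduct.
Variables (R : realFieldType) (n : nat).
Implicit Types (x y z : 'rV[R]_n) (a : R).

Lemma dotv_mx x y : dotv x y = (x *m y^T) 0 0.
Proof. by rewrite mxE; apply: eq_bigr => i _; rewrite mxE. Qed.

Lemma dotvC x y : dotv x y = dotv y x.
Proof. by apply: eq_bigr => i _; rewrite mulrC. Qed.

Lemma dotvDl x y z : dotv (x + y) z = dotv x z + dotv y z.
Proof. by rewrite !dotv_mx mulmxDl mxE. Qed.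

Lemma dotvZl a x y : dotv (a *: x) y = a * dotv x y.
Proof. by rewrite !dotv_mx -scalemxAl mxE. Qed.

Lemma dotvNl x y : dotv (- x) y = - dotv x y.
Proof. by rewrite -scaleN1r dotvZl mulN1r. Qed.

Lemma dotvBl x y z : dotv (x - y) z = dotv x z - dotv y z.
Proof. by rewrite dotvDl dotvNl. Qed.

Lemma dotvDr x y z : dotv x (y + z) = dotv x y + dotv x z.
Proof. by rewrite dotvC dotvDl !(dotvC x). Qed.

Lemma dotvZr a x y : dotv x (a *: y) = a * dotv x y.
Proof. by rewrite dotvC dotvZl dotvC. Qed.

Lemma dotvNr x y : dotv x (- y) = - dotv x y.
Proof. by rewrite dotvC dotvNl dotvC. Qed.

Lemma dotvBr x y z : dotv x (y - z) = dotv x y - dotv x z.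
Proof. by rewrite dotvDr dotvNr. Qed.

Lemma dotv0r x : dotv x 0 = 0.
Proof. by rewrite /dotv big1 // => i _; rewrite mxE mulr0. Qed.

Lemma dotv_ge0 x : 0 <= dotv x x.
Proof. by rewrite sumr_ge0 // => i _; rewrite -expr2 sqr_ge0. Qed.

Lemma dotv_gt0 x : (0 < dotv x x) = (x != 0).
Proof.
rewrite lt_def dotv_ge0 andbT; congr negb; apply/idP/eqP => [|->]; last first.
  by rewrite dotv0r.
rewrite psumr_eq0 => [/allP x0|i _]; last by rewrite -expr2 sqr_ge0.
apply/rowP => i; rewrite mxE.
by have /implyP/(_ isT) := x0 i (mem_index_enum i); rewrite mulf_eq0 orbb => /eqP.
Qed.

Lemma dotv_subr_le x y : dotv (x - y) (x - y) <= 2 * dotv x x + 2 * dotv y y.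
Proof.
have := dotv_ge0 (x + y).
rewrite !(dotvDl, dotvDr, dotvNl, dotvNr) (dotvC y x) opprK; lra.
Qed.

Lemma sqr_coord_le x i : x 0 i ^+ 2 <= dotv x x.
Proof.
rewrite /dotv (bigD1 i) //= expr2 lerDl sumr_ge0 // => j _.
by rewrite -expr2 sqr_ge0.
Qed.

Lemma norm_coordM_le x i j : `|x 0 i * x 0 j| <= dotv x x.
Proof.
have := sqr_coord_le x i; have := sqr_coord_le x j.
rewrite normrM -(real_normK (num_real (x 0 i))) -(real_normK (num_real (x 0 j))).
have := sqr_ge0 (`|x 0 i| - `|x 0 j|); nra.
Qed.

End InnerProduct.

Section BilinearForm.
Variables (R : realFieldType) (n : nat).
Implicit Types (W : 'M[R]_n) (x y : 'rV[R]_n).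

Definition bform W x y : R := (x *m W *m y^T) 0 0.

Lemma bformDl W x1 x2 y : bform W (x1 + x2) y = bform W x1 y + bform W x2 y.
Proof. by rewrite /bform !mulmxDl mxE. Qed.

Lemma bformZl W a x y : bform W (a *: x) y = a * bform W x y.
Proof. by rewrite /bform -!scalemxAl mxE. Qed.

Lemma bformC W x y : W^T = W -> bform W x y = bform W y x.
Proof.
move=> symW; rewrite /bform -[in LHS](trmxK (x *m W *m y^T)) [in LHS]mxE.
by rewrite !trmx_mul trmxK symW mulmxA.
Qed.

Lemma bform_rank1 x y : bform (y^T *m y) x x = dotv x y ^+ 2.
Proof.
rewrite /bform !mulmxA -(mulmxA _ y) mxE big_ord1 -!dotv_mx.
by rewrite (dotvC y) expr2.
Qed.

Lemma bform_CauchySchwarz W x y : W^T = W -> (forall z, 0 <= bform W z z) ->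
  0 < bform W x x -> bform W x y ^+ 2 <= bform W x x * bform W y y.
Proof.
move=> symW W_ge0 Wx_gt0.
have bformDr z z1 z2 : bform W z (z1 + z2) = bform W z z1 + bform W z z2.
  by rewrite bformC // bformDl !(bformC z).
have bformZr z c z1 : bform W z (c *: z1) = c * bform W z z1.
  by rewrite bformC // bformZl (bformC z).
have := W_ge0 (bform W x y *: x - bform W x x *: y).
rewrite -scaleNr !(bformDl, bformDr, bformZl, bformZr) (bformC y x) //.
set a := bform W x y; set b := bform W x x; set c := bform W y y => H.
have : 0 <= b * (b * c - a ^+ 2) by move: H; congr (_ <= _); ring.
by rewrite pmulr_rge0 // subr_ge0.
Qed.

End BilinearForm.

(* Sylvester's identity, from two block factorisations of [[1, b], [-a, 1]]. *)
Lemma det1D_mulmx (R : comPzRingType) n (a : 'cV[R]_n) (b : 'rV[R]_n) :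
  \det (1%:M + a *m b) = 1 + (b *m a) 0 0.
Proof.
pose M := block_mx (1%:M : 'M[R]_1) b (- a) 1%:M.
have eM1 : M = block_mx 1%:M 0 (- a) 1%:M *m block_mx 1%:M b 0 (1%:M + a *m b).
  rewrite /M mulmx_block; congr block_mx;
  rewrite ?mul1mx ?mulmx1 ?mul0mx ?mulmx0 ?addr0 ?add0r ?mulNmx ?mulmxN //.
  by rewrite addrC addrK.
have eM2 : M = block_mx (1%:M + b *m a) b 0 1%:M *m block_mx 1%:M 0 (- a) 1%:M.
  rewrite /M mulmx_block; congr block_mx;
  rewrite ?mul1mx ?mulmx1 ?mul0mx ?mulmx0 ?addr0 ?add0r ?mulNmx ?mulmxN //.
  by rewrite addrK.
have := congr1 determinant eM1; rewrite eM2 !det_mulmx.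
rewrite det_lblock det_ublock det_ublock !det1 !mul1r !mulr1 det_mx11 => <-.
by rewrite [LHS]mxE mxE eqxx.
Qed.

Section RankOneUpdate.
Variables (R : realFieldType) (n : nat).

Lemma det_add_rank1 (W : 'M[R]_n) (z : 'rV[R]_n) : W \in unitmx ->
  \det (W + z^T *m z) = \det W * (1 + bform (invmx W) z z).
Proof.
move=> W_unit.
have -> : W + z^T *m z = W *m (1%:M + (invmx W *m z^T) *m z).
  by rewrite mulmxDr mulmx1 !mulmxA mulmxV // mul1mx.
by rewrite det_mulmx det1D_mulmx /bform mulmxA.
Qed.

(* Cauchy-Schwarz in the form [W] gives [(h.z)^2 <= (h W h^T) (z W^-1 z^T)],
   so a direction [h] along which [z] is as large as [W] forces
   [z W^-1 z^T >= 1]. *)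
Lemma det_add_rank1_ge (W : 'M[R]_n) (z h : 'rV[R]_n) :
  W^T = W -> (forall x, 0 <= bform W x x) -> 0 < \det W ->
  0 < bform W h h -> bform W h h <= dotv h z ^+ 2 ->
  \det W *+ 2 <= \det (W + z^T *m z).
Proof.
move=> symW W_ge0 detW_gt0 Wh_gt0 Wh_le.
have W_unit : W \in unitmx by rewrite unitmxE unitfE gt_eqF.
have symVW : (invmx W)^T = invmx W by rewrite trmx_inv symW.
rewrite det_add_rank1 // -mulr_natr ler_pM2l //.
set y := z *m invmx W.
have -> : bform (invmx W) z z = bform W y y.
  by rewrite /bform /y (mulmxKV W_unit) trmx_mul symVW mulmxA.
have hy : bform W h y = dotv h z.
  by rewrite /bform /y trmx_mul symVW mulmxA (mulmxK W_unit) dotv_mx.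
have := bform_CauchySchwarz y symW W_ge0 Wh_gt0; rewrite hy => CS.
suff : 1 <= bform W y y by lra.
by rewrite -(ler_pM2l Wh_gt0) mulr1 (le_trans Wh_le).
Qed.

Lemma det_le_fact_exp (A : 'M[R]_n) M : (forall i j, `|A i j| <= M) ->
  \det A <= n`!%:R * M ^+ n.
Proof.
case: n A => [|m] A A_le; first by rewrite det_mx00 expr0 mulr1.
apply: le_trans (ler_norm _) _.
rewrite /determinant; apply: le_trans (ler_norm_sum _ _ _) _.
have -> : m.+1`!%:R * M ^+ m.+1 = \sum_(s : 'S_m.+1) M ^+ m.+1.
  by rewrite sumr_const card_Sn mulr_natl.
apply: ler_sum => s _; rewrite normrMsign normr_prod.
rewrite -[in X in _ <= X](card_ord m.+1) -prodr_const; apply: ler_prod => i _.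
by rewrite normr_ge0 A_le.
Qed.

End RankOneUpdate.

Section Potential.
Variables (R : realFieldType) (n : nat) (e : R) (P : pred nat) (z : nat -> 'rV[R]_n).
Hypothesis e_gt0 : 0 < e.

Definition potmx k : 'M[R]_n := (e ^+ 2)%:M + \sum_(a < k | P a) (z a)^T *m z a.

Lemma bform_potmx k x :
  bform (potmx k) x x = e ^+ 2 * dotv x x + \sum_(a < k | P a) dotv x (z a) ^+ 2.
Proof.
rewrite /bform /potmx mulmxDr mulmxDl mxE mul_mx_scalar -scalemxAl mxE -dotv_mx.
congr (_ + _); rewrite mulmx_sumr mulmx_suml summxE.
by apply: eq_bigr => a _; rewrite -bform_rank1.
Qed.

Lemma potmx_sym k : (potmx k)^T = potmx k.
Proof.
rewrite /potmx linearD /= tr_scalar_mx linear_sum /=; congr (_ + _).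
by apply: eq_bigr => a _; rewrite trmx_mul trmxK.
Qed.

Lemma bform_potmx_ge0 k x : 0 <= bform (potmx k) x x.
Proof.
rewrite bform_potmx addr_ge0 ?(mulr_ge0 (sqr_ge0 e) (dotv_ge0 x)) //.
by rewrite sumr_ge0 // => a _; rewrite sqr_ge0.
Qed.

Lemma potmxS k : potmx k.+1 = potmx k + (if P k then (z k)^T *m z k else 0).
Proof. by rewrite /potmx -addrA big_mkcond big_ord_recr /= -big_mkcond. Qed.

Lemma count_iotaS k : count P (iota 0 k.+1) = (count P (iota 0 k) + P k)%N.
Proof. by rewrite -addn1 iotaD count_cat /= addn0. Qed.

Lemma sum1_iota_count k : \sum_(a < k | P a) (1 : R) = (count P (iota 0 k))%:R.
Proof.
have -> : iota 0 k = index_iota 0 k by rewrite /index_iota subn0.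
by rewrite -sum1_count natr_sum big_mkord.
Qed.

Lemma det_potmx_ge N :
  (forall b, (b < N)%N -> P b -> exists2 h, 0 < dotv h h &
     bform (potmx b) h h <= dotv h (z b) ^+ 2) ->
  2 ^+ count P (iota 0 N) * e ^+ (2 * n) <= \det (potmx N).
Proof.
elim: N => [_|k IHk large].
  by rewrite /potmx big_ord0 addr0 det_scalar mul1r exprM.
have {}IHk := IHk (fun b lt_bk => large b (ltnW lt_bk)).
rewrite potmxS count_iotaS exprD.
case Pk: (P k); last by rewrite addr0 mulr1.
have [h h_gt0 h_large] := large k (ltnSn k) Pk.
apply: le_trans (det_add_rank1_ge (potmx_sym k) (@bform_potmx_ge0 k) _ _ h_large).
- by rewrite expr1 mulrAC mulr_natr lerMn2r IHk orbT.
- by apply: lt_le_trans IHk; rewrite mulr_gt0 ?exprn_gt0.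
- rewrite bform_potmx ltr_wpDr ?mulr_gt0 ?exprn_gt0 //.
  by rewrite sumr_ge0 // => a _; rewrite sqr_ge0.
Qed.

Lemma potmx_entry_le N B i j : (forall a, (a < N)%N -> P a -> dotv (z a) (z a) <= B) ->
  `|potmx N i j| <= e ^+ 2 + B * (count P (iota 0 N))%:R.
Proof.
move=> z_le; rewrite /potmx mxE summxE.
apply: le_trans (ler_normD _ _) _; apply: lerD.
  rewrite mxE; case: (i == j); first by rewrite mulr1n ger0_norm ?sqr_ge0.
  by rewrite mulr0n normr0 sqr_ge0.
rewrite -sum1_iota_count mulr_sumr mulr1.
apply: le_trans (ler_norm_sum _ _ _) _; apply: ler_sum => a Pa.
rewrite mxE big_ord1 !mxE.
exact: le_trans (norm_coordM_le _ _ _) (z_le a (ltn_ord a) Pa).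
Qed.

Theorem potential_bound N B :
  (forall a, (a < N)%N -> P a -> dotv (z a) (z a) <= B) ->
  (forall b, (b < N)%N -> P b -> exists2 h, 0 < dotv h h &
     bform (potmx b) h h <= dotv h (z b) ^+ 2) ->
  2 ^+ count P (iota 0 N) * e ^+ (2 * n) <=
    n`!%:R * (e ^+ 2 + B * (count P (iota 0 N))%:R) ^+ n.
Proof.
move=> z_le large; apply: le_trans (det_potmx_ge large) _.
by apply: det_le_fact_exp => i j; apply: potmx_entry_le.
Qed.

End Potential.

Lemma fact_leq_exp n : (n`! <= n ^ n)%N.
Proof.
elim: n => // n IHn; rewrite factS expnS leq_mul // (leq_trans IHn) //.
by case: n {IHn} => // n; rewrite leq_exp2r.
Qed.

Section Arithmetic.
Variable R : realType.

Lemma half_le_ln2 : 1 / 2 <= ln (2 : R).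
Proof.
have := @le_ln1Dx R (- (1 / 2)) ltac:(lra).
have -> : 1 + - (1 / 2) = (2 : R)^-1 by field.
rewrite lnV ?posrE //; lra.
Qed.

Lemma ln_le_div_sub1 (c y : R) : 0 < c -> 0 < y -> ln y <= y / c - 1 + ln c.
Proof.
move=> c_gt0 y_gt0; have yc_gt0 : 0 < y / c by rewrite divr_gt0.
have := @le_ln1Dx R (y / c - 1) ltac:(lra).
by rewrite addrC subrK ln_div ?posrE //; lra.
Qed.

Lemma pow2_le_of_potential (n m : nat) (eps : R) : (0 < n)%N -> 0 < eps -> eps <= 1 ->
  2 ^+ m * (eps / 2) ^+ (2 * n) <= n`!%:R * ((eps / 2) ^+ 2 + 4 * m%:R) ^+ n ->
  2 ^+ m <= ((n%:R / eps) ^+ 2 * (1 + 16 * m%:R / n%:R)) ^+ n.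
Proof.
move=> n_gt0 eps_gt0 eps_le1 pot; have m_ge0 := ler0n R m.
set e := eps / 2; set N : R := n%:R; set X := _ * _.
have N_ge1 : 1 <= N by rewrite ler1n.
have e2_gt0 : 0 < e ^+ 2 by rewrite exprn_gt0 // divr_gt0.
have NX : N * (e ^+ 2 + 4 * m%:R) <= X * e ^+ 2.
  have -> : X * e ^+ 2 = (N * N + 16 * m%:R * N) / 4.
    by rewrite /X /e; field; apply/andP; split; apply/eqP; lra.
  have -> : N * (e ^+ 2 + 4 * m%:R) = (N * eps ^+ 2 + 16 * m%:R * N) / 4.
    by rewrite /e; field.
  rewrite ler_pM2r ?invr_gt0 // lerD2r ler_pM2l ?(lt_le_trans ltr01) //.
  by rewrite expr2; nra.
rewrite -(ler_pM2r (exprn_gt0 n e2_gt0)) -exprM (le_trans pot) //.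
apply: le_trans (_ : N ^+ n * (e ^+ 2 + 4 * m%:R) ^+ n <= _).
  have fact_le : n`!%:R <= N ^+ n by rewrite -natrX ler_nat fact_leq_exp.
  by rewrite ler_pM2r // exprn_gt0 // -/e; lra.
have X_ge0 : 0 <= X by rewrite mulr_ge0 ?sqr_ge0 // addr_ge0 ?divr_ge0 ?mulr_ge0 //; lra.
rewrite exprM -!exprMn; apply: lerXn2r NX; rewrite nnegrE.
  by rewrite mulr_ge0 //; lra.
by rewrite mulr_ge0 // ltW.
Qed.

(* Taking logarithms, [m ln 2 <= n (2 L + ln Y)] with [L = ln (n / eps)] and
   [Y = 1 + 16 m / n]; the bound [ln Y <= Y / 64 - 1 + 6 ln 2] absorbs the
   term [16 m / n] into [m / 4]. *)
Lemma count_le_of_pow2 (n m : nat) (eps : R) : (2 <= n)%N -> 0 < eps -> eps < 1 ->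
  2 ^+ m <= ((n%:R / eps) ^+ 2 * (1 + 16 * m%:R / n%:R)) ^+ n ->
  m.+1%:R <= 64 * n%:R * ln (n%:R / eps).
Proof.
move=> n_ge2 eps_gt0 eps_lt1 pow2_le.
have m_ge0 := ler0n R m.
set N : R := n%:R in pow2_le *; set Y := 1 + 16 * m%:R / N in pow2_le *.
have N_ge2 : 2 <= N by rewrite (ler_nat R 2 n).
have Ne_ge2 : 2 <= N / eps by rewrite ler_pdivlMr //; lra.
have Y_ge1 : 1 <= Y by rewrite /Y lerDl divr_ge0 ?mulr_ge0 //; lra.
have m_ln2 : m%:R * ln 2 <= N * (2 * ln (N / eps) + ln Y).
  have X_gt0 : 0 < (N / eps) ^+ 2 * Y by rewrite mulr_gt0 ?exprn_gt0 //; lra.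
  have : ln (2 ^+ m) <= ln (((N / eps) ^+ 2 * Y) ^+ n).
    by rewrite ler_ln ?posrE ?exprn_gt0.
  rewrite !lnXn // lnM ?posrE ?exprn_gt0 //; try lra.
  by rewrite lnXn; try lra; rewrite -!mulr_natl.
have lnY : N * ln Y <= N * (Y / 64 - 1 + 6 * ln 2).
  have -> : 6 * ln 2 = ln (64 : R).
    by rewrite (_ : 64 = 2 ^+ 6) ?lnXn ?mulr_natl // -natrX.
  by rewrite ler_pM2l ?ln_le_div_sub1 //; lra.
have NY : N * (Y / 64 - 1 + 6 * ln 2) = (N + 16 * m%:R) / 64 - N + 6 * (N * ln 2).
  by rewrite /Y; field; lra.
have ln2_ge := half_le_ln2.
have ln2_L : N * ln 2 <= N * ln (N / eps) by rewrite ler_pM2l ?ler_ln ?posrE //; lra.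
have N_ln2 : 1 <= N * ln 2 by nra.
have m_half : m%:R * (1 / 2) <= m%:R * ln 2 :> R by nra.
rewrite NY in lnY; rewrite mulrDr mulrCA in m_ln2.
rewrite -addn1 natrD -mulrA; lra.
Qed.

End Arithmetic.

Section ConeSeparation.
Variables (R : realType) (n : nat).
Local Open Scope classical_set_scope.

Lemma near_min_dotv (h v : 'rV[R]_n) (D d t : R) : 0 < t ->
  dotv h h < D + d -> D <= dotv (h - t *: v) (h - t *: v) ->
  2 * dotv h v < d / t + t * dotv v v.
Proof.
move=> t_gt0 h_lt; rewrite !(dotvBl, dotvBr, dotvZl, dotvZr) (dotvC v h) => h_ge.
rewrite -(ltr_pM2l t_gt0) mulrDr [t * (d / t)]mulrC divfK ?gt_eqF //; lra.
Qed.

Variables (w : 'rV[R]_n) (g : nat -> 'rV[R]_n) (K : nat).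
Local Notation comb al := (\sum_(j < K) al j *: g j).
Local Notation dist2 al := (dotv (w - comb al) (w - comb al)).

Lemma cone_near_min (d : R) : 0 < d ->
  exists2 al : nat -> R, (forall j, 0 <= al j) &
    forall al' : nat -> R, (forall j, 0 <= al' j) -> dist2 al < dist2 al' + d.
Proof.
move=> d_gt0; pose E := [set dist2 al | al in [set al : nat -> R | forall j, 0 <= al j]].
have E_w : E (dotv w w).
  exists (fun=> 0); first by move=> j /=.
  by rewrite big1 ?subr0 // => j _; rewrite scale0r.
have E_lb : has_lbound E by exists 0 => _ [al _ <-]; apply: dotv_ge0.
have [_ [al al_ge0 <-] al_lt] := inf_adherent d_gt0 (conj (ex_intro _ _ E_w) E_lb).
exists al => // al' al'_ge0; apply: lt_le_trans al_lt _.
by rewrite lerD2r; apply: (ge_inf E_lb); exists al'.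
Qed.

Lemma comb_bump (al : nat -> R) j t : (j < K)%N ->
  comb (fun i => al i + (i == j)%:R * t) = comb al + t *: g j.
Proof.
move=> lt_jK; under eq_bigr do rewrite scalerDl.
rewrite big_split /=; congr (_ + _).
rewrite (bigD1 (Ordinal lt_jK)) //= eqxx mul1r big1 ?addr0 // => i.
by rewrite -val_eqE /= => /negPf->; rewrite mul0r scale0r.
Qed.

(* [h] is the residual of an approximate projection of [w] onto the cone
   spanned by the [g j]; moving the projection along [g j], or towards [0],
   cannot decrease the distance by more than the approximation error. *)
Lemma cone_separation (eps eta : R) : 0 < eta ->
  (forall al : nat -> R, (forall j, 0 <= al j) -> eps ^+ 2 < dist2 al) ->
  exists h, [/\ eps ^+ 2 <= dotv h h, forall j, (j < K)%N -> dotv h (g j) <= eta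
              & dotv h h - eta <= dotv h w].
Proof.
move=> eta_gt0 far.
pose M := \sum_(j < K) dotv (g j) (g j) + 4 * dotv w w + 2 + eta ^+ 2.
have G_ge0 : 0 <= \sum_(j < K) dotv (g j) (g j) by rewrite sumr_ge0 // => j _; apply: dotv_ge0.
have w_ge0 := dotv_ge0 w; have eta2_ge0 := sqr_ge0 eta.
have M_gt0 : 0 < M by rewrite /M; lra.
pose t := eta / M.
have t_gt0 : 0 < t by rewrite divr_gt0.
have tM : t * M = eta by rewrite /t divfK ?gt_eqF.
have t_le1 : t <= 1 by rewrite ler_pdivrMr // mul1r /M; have := sqr_ge0 (eta - 1); nra.
have d_le1 : t * eta <= 1 by rewrite /t mulrAC ler_pdivrMr // mul1r -expr2 /M; lra.
have [al al_ge0 al_min] := cone_near_min (mulr_gt0 t_gt0 eta_gt0).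
pose h := w - comb al.
have near_min v (al' : nat -> R) : (forall j, 0 <= al' j) -> w - comb al' = h - t *: v ->
    dotv v v <= M -> dotv h v < eta.
  move=> al'_ge0 e_al' vM; have := al_min _ al'_ge0; rewrite e_al' => h_lt.
  have := near_min_dotv t_gt0 h_lt (lexx _); rewrite mulrAC divff ?gt_eqF // mul1r.
  have : t * dotv v v <= eta by rewrite -tM ler_pM2l.
  lra.
exists h; split.
- exact/ltW/far.
- move=> j lt_jK; apply/ltW/(near_min _ (fun i => al i + (i == j)%:R * t)).
  + by move=> i; apply: addr_ge0 (al_ge0 i) (mulr_ge0 (ler0n _ _) (ltW t_gt0)).
  + by rewrite comb_bump // opprD addrA.
  + rewrite /M (bigD1 (Ordinal lt_jK)) //=.
    have : 0 <= \sum_(i < K | i != Ordinal lt_jK) dotv (g i) (g i).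
      by rewrite sumr_ge0 // => i _; apply: dotv_ge0.
    lra.
- have p_lt : - dotv h (comb al) < eta.
    rewrite -dotvNr; apply: (near_min _ (fun i => (1 - t) * al i)).
    + by move=> i; rewrite mulr_ge0 ?al_ge0 ?subr_ge0.
    + under eq_bigr do rewrite -scalerA.
      by rewrite -scaler_sumr scalerN opprK scalerBl scale1r opprB addrCA addrC.
    + rewrite dotvNl dotvNr opprK.
      have -> : comb al = w - h by rewrite /h opprB addrC subrK.
      have comb0 : \sum_(j < K) (fun=> 0 : R) j *: g j = 0.
        by rewrite big1 // => j _; rewrite scale0r.
      have := al_min _ (fun=> lexx 0); rewrite comb0 subr0.
      have := dotv_subr_le w h; rewrite /M; lra.
  have -> : dotv h w = dotv h h + dotv h (comb al) by rewrite -dotvDr subrK.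
  lra.
Qed.

End ConeSeparation.

Section FilterNth.
Variables (T : eqType) (x0 : T) (s : seq T) (i : nat).
Hypotheses (s_uniq : uniq s) (lt_i_s : (i < size s)%N).

Lemma filter_neq_nth : [seq y <- s | y != nth x0 s i] = take i s ++ drop i.+1 s.
Proof. by rewrite -rem_filter // remE index_uniq. Qed.

Lemma nth_filter_neq_nth j : (j < i)%N -> nth x0 [seq y <- s | y != nth x0 s i] j = nth x0 s j.
Proof. by move=> lt_ji; rewrite filter_neq_nth nth_cat size_take lt_i_s lt_ji nth_take. Qed.

Lemma size_filter_neq_nth : size [seq y <- s | y != nth x0 s i] = (size s).-1.
Proof. by rewrite -rem_filter // size_rem // mem_nth. Qed.

End FilterNth.

Section SortByU.
Variables (R : realFieldType) (d : nat) (u : 'rV[R]_d).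
Implicit Types (S : seq 'rV[R]_d) (x y : 'rV[R]_d).

Let leu x y := dotv u y <= dotv u x.

Let leu_total : total leu.
Proof. by move=> x y; apply: le_total. Qed.

Let leu_trans : transitive leu.
Proof. by move=> y x z /= h1 h2; apply: le_trans h2 h1. Qed.

Lemma perm_sort_by_u S : perm_eq (sort_by_u u S) S.
Proof. by rewrite /sort_by_u perm_sort. Qed.

Lemma sort_by_u_filter (p : pred 'rV[R]_d) S :
  sort_by_u u (filter p S) = filter p (sort_by_u u S).
Proof. by rewrite /sort_by_u filter_sort. Qed.

Lemma sort_by_u_lt_head S y : uniq [seq dotv u x | x <- S] ->
  y \in sort_by_u u S -> y != (sort_by_u u S)`_0 ->
  dotv u y < dotv u (sort_by_u u S)`_0.
Proof.
move=> uniq_u; have := perm_sort_by_u S.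
have : sorted leu (sort_by_u u S) := sort_sorted leu_total S.
case: (sort_by_u u S) => // y0 ys sorted_ys perm_ys; rewrite inE => /predU1P[->|y_in].
  by rewrite eqxx.
move=> neq_y; have /allP/(_ y y_in) := order_path_min leu_trans sorted_ys.
rewrite /leu le_eqVlt => /predU1P[eq_u|//].
move: uniq_u; rewrite -(perm_uniq (perm_map _ perm_ys)) /= => /andP[/negP[]].
by rewrite -eq_u map_f.
Qed.

End SortByU.

Section Orthonormal.
Variables (R : realFieldType) (d k : nat) (V : 'M[R]_(k, d)).

Lemma dotv_mulmxr (x : 'rV[R]_d) (y : 'rV[R]_k) : dotv x (y *m V) = dotv (x *m V^T) y.
Proof. by rewrite !dotv_mx trmx_mul mulmxA. Qed.

Hypothesis V_orth : V *m V^T = 1%:M.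

Lemma dotv_mulmx_orth (y1 y2 : 'rV[R]_k) : dotv (y1 *m V) (y2 *m V) = dotv y1 y2.
Proof. by rewrite dotv_mulmxr -mulmxA V_orth mulmx1. Qed.

Lemma submx_orth_coord (x : 'rV[R]_d) : (x <= V)%MS -> x = x *m V^T *m V.
Proof. by case/submxP=> D ->; rewrite -(mulmxA D) V_orth mulmx1. Qed.

Lemma dotv_coord_orth (h x : 'rV[R]_d) : (x <= V)%MS -> dotv h x = dotv (h *m V^T) (x *m V^T).
Proof. by move=> /submx_orth_coord {1}->; rewrite dotv_mulmxr. Qed.

Lemma Bessel_orth (h : 'rV[R]_d) : dotv (h *m V^T) (h *m V^T) <= dotv h h.
Proof.
set c := h *m V^T.
have := dotv_ge0 (h - c *m V).
rewrite dotvBl !dotvBr dotv_mulmx_orth (dotvC (c *m V)) dotv_mulmxr; lra.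
Qed.

End Orthonormal.

Lemma norm2E (R : rcfType) d (x : 'rV[R]_d) : norm2 x = Num.sqrt (dotv x x).
Proof. by congr Num.sqrt; apply: eq_bigr => i _; rewrite expr2. Qed.

Lemma norm2_le1 (R : rcfType) d (x : 'rV[R]_d) : (norm2 x <= 1) = (dotv x x <= 1).
Proof. by rewrite norm2E -{1}sqrtr1 ler_sqrt ?ler01. Qed.

Section Increments.
Variable R : realFieldType.

Lemma sum_sqr_le_sqr_sum b (P : pred nat) (q : nat -> R) :
  (forall a, (a < b)%N -> P a -> 0 <= q a) ->
  \sum_(a < b | P a) q a ^+ 2 <= (\sum_(a < b | P a) q a) ^+ 2.
Proof.
move=> q_ge0; rewrite expr2 mulr_suml; apply: ler_sum => a Pa.
rewrite expr2 ler_wpM2l ?q_ge0 // (bigD1 a) //= lerDl.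
by rewrite sumr_ge0 // => i /andP[Pi _]; apply: q_ge0.
Qed.

(* As [|q| <= 2 eta - q] whenever [q <= eta], the hypotheses give
   [q b >= sum_(a < b) |q a| + H / 2]. *)
Lemma increments_sqr_le (q : nat -> R) (P : pred nat) b (H eta : R) :
  (forall a, (a < b)%N -> q a <= eta) -> H - eta <= \sum_(a < b.+1) q a ->
  eta * (2 * b%:R + 1) <= H / 2 -> 0 <= eta ->
  \sum_(a < b | P a) q a ^+ 2 + H ^+ 2 / 4 <= q b ^+ 2.
Proof.
move=> q_le sum_ge eta_le eta_ge0.
set A := \sum_(a < b | P a) `|q a|.
have sqr_le : \sum_(a < b | P a) q a ^+ 2 <= A ^+ 2.
  rewrite (eq_bigr (fun a : 'I_b => `|q a| ^+ 2)) => [|a _]; last first.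
    by rewrite real_normK ?num_real.
  exact: (@sum_sqr_le_sqr_sum b P (fun a => `|q a|)).
have A_ge0 : 0 <= A by rewrite sumr_ge0.
have A_le : A <= \sum_(a < b) (2 * eta - q a).
  rewrite /A big_mkcond /=; apply: ler_sum => a _.
  have := q_le a (ltn_ord a); case: (P a) => /= qa; last lra.
  by rewrite ler_norml; apply/andP; split; lra.
rewrite sumrB sumr_const card_ord -mulr_natl in A_le.
rewrite big_ord_recr /= in sum_ge.
have H_ge0 : 0 <= H by have := ler0n R b; nra.
have qb_ge : A + H / 2 <= q b by lra.
have : (A + H / 2) ^+ 2 <= q b ^+ 2 by rewrite ler_sqr ?nnegrE //; lra.
have := mulr_ge0 A_ge0 H_ge0; lra.
Qed.

End Increments.

Section Derivability.
Variables (R : realType) (d : nat) (eps : R) (u : 'rV[R]_d).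
Hypothesis eps_gt0 : 0 < eps.

Lemma not_derives_separation (eta : R) (T : seq 'rV[R]_d) x :
  0 < eta -> (0 < size T)%N -> ~ derives eps u T x ->
  exists h, [/\ eps ^+ 2 <= dotv h h,
    forall j, (j < (size T).-1)%N ->
      dotv h ((sort_by_u u T)`_j.+1 - (sort_by_u u T)`_j) <= eta
    & dotv h h - eta <= dotv h (x - (sort_by_u u T)`_0)].
Proof.
move=> eta_gt0; rewrite /derives -(perm_size (perm_sort_by_u u T)).
case: (sort_by_u u T) => [//|x1 r] _ underiv.
apply: cone_separation eta_gt0 _ => al al_ge0.
rewrite ltNge; apply/negP => le_eps; apply: underiv; exists al; split => //.
by rewrite norm2E -(ger0_norm (ltW eps_gt0)) -sqrtr_sqr ler_wsqrtr.
Qed.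

Lemma line_cone_comb (V : 'M[R]_(1, d)) (x x1 x2 : 'rV[R]_d) :
  (x <= V)%MS -> (x1 <= V)%MS -> (x2 <= V)%MS ->
  dotv u x < dotv u x1 -> dotv u x2 < dotv u x1 ->
  exists2 mu, 0 <= mu & x - x1 = mu *: (x2 - x1).
Proof.
move=> /submxP[a ->] /submxP[a1 ->] /submxP[a2 ->].
rewrite (mx11_scalar a) (mx11_scalar a1) (mx11_scalar a2) !mul_scalar_mx !dotvZr.
move: (a 0 0) (a1 0 0) (a2 0 0) => c c1 c2 lt1 lt2.
have lt12 : 0 < (c1 - c) * (c1 - c2) by nra.
have c12 : c1 - c2 != 0 by apply: contraTneq lt12 => ->; rewrite mulr0 ltxx.
exists ((c1 - c) / (c1 - c2)).
  have -> : (c1 - c) / (c1 - c2) = (c1 - c) * (c1 - c2) / (c1 - c2) ^+ 2 by field.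
  by rewrite divr_ge0 ?sqr_ge0 ?ltW.
by rewrite -!scalerBl scalerA; congr (_ *: _); field.
Qed.

Lemma derives_of_line (V : 'M[R]_(1, d)) (S : seq 'rV[R]_d) b :
  (forall x, x \in S -> (x <= V)%MS) -> uniq [seq dotv u x | x <- S] ->
  (b.+1 < size S)%N -> (2 < size S)%N ->
  derives eps u [seq y <- S | y != (sort_by_u u S)`_b.+1] (sort_by_u u S)`_b.+1.
Proof.
move=> S_line uniq_u lt_bS S_gt2.
have perm_ys := perm_sort_by_u u S.
set ys := sort_by_u u S in perm_ys *; set x := ys`_b.+1.
have ys_uniq : uniq ys by rewrite (perm_uniq perm_ys) (map_uniq uniq_u).
have lt_bys : (b.+1 < size ys)%N by rewrite (perm_size perm_ys).
have x_ys : x \in ys by apply: mem_nth.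
set T := [seq y <- S | y != x].
have uniq_uT : uniq [seq dotv u y | y <- T].
  by apply: subseq_uniq uniq_u; rewrite map_subseq // filter_subseq.
have sortT : sort_by_u u T = [seq y <- ys | y != x] by apply: sort_by_u_filter.
have headT : (sort_by_u u T)`_0 = ys`_0 by rewrite sortT nth_filter_neq_nth.
have sizeT : size (sort_by_u u T) = (size S).-1.
  by rewrite sortT size_filter_neq_nth // (perm_size perm_ys).
have memT y : y \in sort_by_u u T -> y \in S.
  by rewrite (perm_mem (perm_sort_by_u u T)) mem_filter => /andP[].
have x_lt : dotv u x < dotv u ys`_0.
  apply: sort_by_u_lt_head => //.
  by rewrite nth_uniq // (ltn_trans _ lt_bys).
have lt_head := sort_by_u_lt_head uniq_uT.
have uniqT : uniq (sort_by_u u T) by rewrite sort_uniq (map_uniq uniq_uT).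
rewrite /derives; move: sizeT headT memT lt_head uniqT.
case: (sort_by_u u T) => [|x1 [|x2 r]] /=; [lia | lia |] => _ -> memT lt_head.
rewrite inE => /andP[/norP[x2_neq _] _].
have [mu mu_ge0 e] : exists2 mu, 0 <= mu & x - ys`_0 = mu *: (x2 - ys`_0).
  apply: (@line_cone_comb V) => //.
  - by apply/S_line; rewrite -(perm_mem perm_ys).
  - by apply/S_line/memT; rewrite mem_head.
  - by apply/S_line/memT; rewrite !inE eqxx orbT.
  - by apply: lt_head; rewrite ?inE ?eqxx ?orbT // eq_sym.
exists (fun j => if j == 0%N then mu else 0); split => [j|]; first by case: (j == 0%N).
rewrite big_ord_recl big1 /= => [|j _]; last by rewrite scale0r.
by rewrite addr0 e subrr norm2E dotv0r sqrtr0 ltW.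
Qed.

End Derivability.

(* Index [a] stands for the point [(sort_by_u u S)`_a.+1], which ends the step
   from [(sort_by_u u S)`_a]. *)
Definition underived (R : realType) d (eps : R) (u : 'rV[R]_d) (S : seq 'rV[R]_d) a :=
  ~~ `[< derives eps u [seq y <- S | y != (sort_by_u u S)`_a.+1] (sort_by_u u S)`_a.+1 >].

Section UnderivedPoints.
Variables (R : realType) (d k : nat) (eps : R) (u : 'rV[R]_d) (S : seq 'rV[R]_d).
Variable V : 'M[R]_(k, d).
Hypotheses (eps_gt0 : 0 < eps) (V_orth : V *m V^T = 1%:M).
Hypotheses (S_span : forall x, x \in S -> (x <= V)%MS) (uniq_u : uniq [seq dotv u x | x <- S]).

Local Notation ys := (sort_by_u u S).
Local Notation P := (underived eps u S).

Definition incr a : 'rV[R]_k := (ys`_a.+1 - ys`_a) *m V^T.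

Lemma ys_uniq : uniq ys.
Proof. by rewrite (perm_uniq (perm_sort_by_u u S)) (map_uniq uniq_u). Qed.

Lemma ys_mem a : (a < size S)%N -> ys`_a \in S.
Proof.
have perm_ys := perm_sort_by_u u S.
by move=> lt_aS; rewrite -(perm_mem perm_ys) mem_nth ?(perm_size perm_ys).
Qed.

Lemma dotv_incr (h : 'rV[R]_d) a : (a.+1 < size S)%N ->
  dotv (h *m V^T) (incr a) = dotv h (ys`_a.+1 - ys`_a).
Proof.
move=> lt_aS; rewrite /incr mulmxBl !dotvBr.
by rewrite -!dotv_coord_orth // S_span // ys_mem // ltnW.
Qed.

Lemma incr_sqr_le a : (forall x, x \in S -> norm2 x <= 1) -> (a.+1 < size S)%N ->
  dotv (incr a) (incr a) <= 4.
Proof.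
move=> S_le1 lt_aS; rewrite /incr mulmxBl.
have coord_le1 i : (i < size S)%N -> dotv (ys`_i *m V^T) (ys`_i *m V^T) <= 1.
  move=> lt_iS; apply: le_trans (Bessel_orth V_orth _) _.
  by rewrite -norm2_le1 S_le1 // ys_mem.
have := coord_le1 _ lt_aS; have := coord_le1 a (ltnW lt_aS).
have := dotv_subr_le (ys`_a.+1 *m V^T) (ys`_a *m V^T); lra.
Qed.

(* Removing [ys`_b.+1] from [S] leaves [ys`_0], ..., [ys`_b] at the head of
   the sorted list, so the separating vector controls the first [b] steps of
   [ys] and, by telescoping, the whole path from [ys`_0] to [ys`_b.+1]. *)
Lemma underived_separation b (eta : R) : 0 < eta -> (b.+1 < size S)%N -> P b ->
  exists h, [/\ eps ^+ 2 <= dotv h h,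
    forall a, (a < b)%N -> dotv h (ys`_a.+1 - ys`_a) <= eta
    & dotv h h - eta <= \sum_(a < b.+1) dotv h (ys`_a.+1 - ys`_a)].
Proof.
move=> eta_gt0 lt_bS /asboolPn underiv.
have size_ys : size ys = size S := perm_size (perm_sort_by_u u S).
pose T := [seq y <- S | y != ys`_b.+1].
have sortT : sort_by_u u T = [seq y <- ys | y != ys`_b.+1] by apply: sort_by_u_filter.
have sizeT : size T = (size S).-1.
  by rewrite -(perm_size (perm_sort_by_u u T)) sortT size_filter_neq_nth ?ys_uniq ?size_ys.
have prefixT j : (j <= b)%N -> (sort_by_u u T)`_j = ys`_j.
  by move=> le_jb; rewrite sortT nth_filter_neq_nth ?ys_uniq ?size_ys.
have [|h [eps_h step_le far]] := not_derives_separation eps_gt0 eta_gt0 _ underiv.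
  by rewrite sizeT; lia.
exists h; split => // [a lt_ab|].
  have /step_le : (a < (size T).-1)%N by rewrite sizeT; lia.
  by rewrite (prefixT a.+1 lt_ab) (prefixT a (ltnW lt_ab)).
rewrite -(big_mkord xpredT (fun a => dotv h (ys`_a.+1 - ys`_a))).
rewrite (telescope_sumr_eq (fun a => dotv h ys`_a)) // => [|a _].
  by rewrite -dotvBr -(prefixT 0).
by rewrite dotvBr.
Qed.

(* Take [eta = eps^2 / (4 |S|)] in [underived_separation] and
   [increments_sqr_le]; the projection [h V^T] has the same increments along
   [ys] and no larger norm. *)
Lemma underived_large b : (b.+1 < size S)%N -> P b ->
  exists2 h : 'rV[R]_k, 0 < dotv h h &
    (eps / 2) ^+ 2 * dotv h h + \sum_(a < b | P a) dotv h (incr a) ^+ 2 <=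
      dotv h (incr b) ^+ 2.
Proof.
move=> lt_bS Pb; pose s : R := (size S)%:R; pose eta := eps ^+ 2 / (4 * s).
have s_gt0 : 0 < s by rewrite ltr0n; lia.
have eta_gt0 : 0 < eta by rewrite divr_gt0 ?exprn_gt0 ?mulr_gt0.
have [h [eps_h q_le sum_q]] := underived_separation eta_gt0 lt_bS Pb.
pose q a := dotv h (ys`_a.+1 - ys`_a); set H := dotv h h in eps_h sum_q.
have H_gt0 : 0 < H by apply: lt_le_trans eps_h; rewrite exprn_gt0.
have eta_b : eta * (2 * b%:R + 1) <= H / 2.
  have : (b.+1 <= size S)%N by apply: ltnW.
  rewrite -(ler_nat R) -addn1 natrD -/s => le_bs.
  have : eta * s = eps ^+ 2 / 4 by rewrite /eta; field; rewrite gt_eqF.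
  have := ler_wpM2l (ltW eta_gt0) le_bs; lra.
have key := @increments_sqr_le R q P b H eta q_le sum_q eta_b (ltW eta_gt0).
have q_incr a : (a <= b)%N -> dotv (h *m V^T) (incr a) = q a.
  by move=> le_ab; apply: dotv_incr; lia.
exists (h *m V^T).
  rewrite dotv_gt0; apply: contraTneq key => h'0.
  rewrite -q_incr // h'0 dotvC dotv0r expr0n /= -ltNge ltr_wpDl ?divr_gt0 ?exprn_gt0 //.
  by rewrite sumr_ge0 // => a _; rewrite sqr_ge0.
rewrite q_incr // (eq_bigr (fun a : 'I_b => q a ^+ 2)) => [|a _]; last first.
  by rewrite q_incr // ltnW.
have bessel : dotv (h *m V^T) (h *m V^T) <= H := Bessel_orth V_orth h.
have := ler_wpM2l (sqr_ge0 (eps / 2)) bessel.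
have := ler_wpM2r (ltW H_gt0) eps_h; lra.
Qed.

Lemma count_underived_le : (1 < k)%N -> eps < 1 -> (forall x, x \in S -> norm2 x <= 1) ->
  (count P (iota 0 (size S).-1)).+1%:R <= 64 * k%:R * ln (k%:R / eps).
Proof.
move=> k_gt1 eps_lt1 S_le1.
apply: count_le_of_pow2 => //; apply: pow2_le_of_potential; rewrite ?(ltW eps_lt1) //.
  exact: ltnW.
apply: (@potential_bound _ _ (eps / 2) P incr); first by rewrite divr_gt0.
  by move=> a lt_aS _; apply: incr_sqr_le; rewrite // -ltn_predRL.
move=> b lt_bS Pb; have [|h h_gt0 h_large] := underived_large _ Pb.
  by rewrite -ltn_predRL.
by exists h; rewrite ?bform_potmx.
Qed.

Lemma count_underived_tail : (0 < size S)%N ->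
  (count (predC (fun x => `[< derives eps u [seq y <- S | y != x] x >])) S <=
    (count P (iota 0 (size S).-1)).+1)%N.
Proof.
move=> S_gt0; have /seq.permP <- := perm_sort_by_u u S.
have := perm_size (perm_sort_by_u u S); rewrite /underived.
case: ys => [|y0 ys'] /= size_ys; first by rewrite -size_ys in S_gt0.
apply: leq_trans (leq_add (leq_b1 _) (leqnn _)) _.
by rewrite add1n ltnS -size_ys -[ys' in count _ ys'](mkseq_nth 0) count_map.
Qed.

End UnderivedPoints.

Lemma count_not_self_derived_le (R : realType) d k (eps : R) (u : 'rV[R]_d)
    (S : seq 'rV[R]_d) (V : 'M[R]_(k, d)) :
  0 < eps -> eps < 1 -> V *m V^T = 1%:M -> (forall x, x \in S -> (x <= V)%MS) ->
  (forall x, x \in S -> norm2 x <= 1) -> uniq [seq dotv u x | x <- S] ->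
  (0 < k)%N -> (2 < size S)%N ->
  (count (predC (fun x => `[< derives eps u [seq y <- S | y != x] x >])) S)%:R <=
    Num.max 1 (64 * k%:R * ln (k%:R / eps)).
Proof.
move=> eps_gt0 eps_lt1 V_orth S_span S_le1 uniq_u k_gt0 S_gt2.
apply: le_trans (_ : (count (underived eps u S) (iota 0 (size S).-1)).+1%:R <= _).
  by rewrite ler_nat count_underived_tail // (ltn_trans _ S_gt2).
case: k V V_orth S_span k_gt0 => [//|[|k]] V V_orth S_span _; last first.
  by rewrite le_max (count_underived_le eps_gt0 V_orth S_span uniq_u) ?orbT.
rewrite (eq_in_count (a2 := pred0)) ?count_pred0 ?le_max ?lexx // => b.
rewrite mem_iota add0n ltn_predRL => /andP[_ lt_bS].
by apply/negbTE/negPn/asboolP; apply: derives_of_line S_span uniq_u lt_bS S_gt2.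
Qed.

Theorem lemmaA2 (R : realType) :
  exists C : R, 0 < C /\
  forall (d : nat) (eps : R) (u : 'rV[R]_d) (S : seq 'rV[R]_d) (d' : nat),
    0 < eps < 1 ->
    (forall x, x \in S -> norm2 x <= 1) ->
    uniq [seq dotv u x | x <- S] ->
    intrinsic_dim S d' ->
    (0 < d')%N ->
    let t : int := Num.ceil (C * d'%:R * ln (d'%:R / eps)) in
    (4%:Z * t <= (size S)%:Z)%R ->
    (3 / 4 : R) * (size S)%:R <=
      ((count (fun x => `[< derives eps u [seq y <- S | y != x] x >]) S)%:R : R).
Proof.
exists 64; split; first lra.
move=> d eps u S d' /andP[eps_gt0 eps_lt1] S_le1 uniq_u [[V [V_orth S_span]] _] d'_gt0 t.
rewrite -(ler_int R) intrM -!pmulrn => S_ge.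
set Q := fun x => `[< derives eps u [seq y <- S | y != x] x >].
have t_ge : 64 * d'%:R * ln (d'%:R / eps) <= t%:~R by apply: ceil_ge.
have B_gt0 : 0 < 64 * d'%:R * ln (d'%:R / eps).
  by rewrite !mulr_gt0 ?ltr0n // ln_gt0 // ltr_pdivlMr // mul1r (lt_le_trans eps_lt1) ?ler1n.
have t_ge1 : 1 <= t%:~R :> R by rewrite ler1z -gtz0_ge1 ceil_gt0.
have S_gt2 : (2 < size S)%N by rewrite -(ltr_nat R); lra.
have not_derived_le : (count (predC Q) S)%:R <= t%:~R :> R.
  apply: le_trans (count_not_self_derived_le eps_gt0 eps_lt1 V_orth S_span S_le1 uniq_u
    d'_gt0 S_gt2) _.
  by rewrite ge_max t_ge1 t_ge.
have : ((count Q S)%:R + (count (predC Q) S)%:R = (size S)%:R :> R).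
  by rewrite -natrD count_predC.
lra.
Qed.
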